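(* Let $f:\Gamma\to\Gamma$ be an irreducible, expanding graph map with stacks $\mathcal{K}_1,\dots,\mathcal{K}_p$ and final edges $\alpha_1,\dots,\alpha_p$. Then for every $i$ and every integer $d\ge0$, $$|f^{d+1}(\alpha_i)|\ge 1+\sum_{\mathcal{K}_j\in B_d(\mathcal{K}_i)}\omega(\mathcal{K}_j).$$
   Context: A graph $\Gamma$ is a finite 1-dimensional CW complex with a chosen orientation on each edge; $\mathcal{E}\Gamma$ is its set of edges, $\bar e$ is the reverse of $e$, $\iota,\tau$ the endpoints. An edge path is a nonempty concatenation $u=e_1\cdots e_k$ of oriented edges with $\tau(e_i)=\iota(e_{i+1})$; $|u|=k$ counts edges without cancelling backtracks; $u$ traverses $e$ if $e$ or $\bar e$ occurs in it. A graph map $f:\Gamma\to\Gamma$ assigns to vertices vertices and to each oriented edge $e$ an edge path $f(e)$ with $\iota(f(e))=f(\iota(e))$, $f(\bar e)=\overline{f(e)}$; powers are compositions, applied to paths by concatenation without tightening. $T(f)$ has $(i,j)$ entry the number of times $f(e_i)$ traverses $e_j$; $f$ is irreducible if $T(f)$ is irreducible and every vertex has valence $\ge3$; expanding if $|f^n(e)|\to\infty$ for every edge. Stacks: $e$ is mixing if $|f(e)|>1$; surplus if non-mixing and $f(e)\in\{f(u),\overline{f(u)}\}$ for some edge $u\notin\{e,\bar e\}$. Stacks are the classes of the equivalence relation on $\mathcal{E}\Gamma$ (unoriented edges) generated by $e\sim f(e)$ for $e$ non-mixing and non-surplus. Each stack has the form $\mathcal{K}=\{e,f(e),\dots,f^s(e)\}$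 with only $f^s(e)$ mixing or surplus; $f^s(e)$ is the final edge. $\alpha_i$ is the final edge of $\mathcal{K}_i$, and the weight is $\omega(\mathcal{K}_i)=|f(\alpha_i)|-1$. The stack graph $\mathcal{SG}(f)$ is the directed graph with vertices $\mathcal{K}_1,\dots,\mathcal{K}_p$ and a directed edge $[\mathcal{K}_i,\mathcal{K}_j]$ whenever $f(\alpha_i)$ contains an edge of $\mathcal{K}_j$; its length is $s([\mathcal{K}_i,\mathcal{K}_j])=\min\{s\ge1:f^s(\alpha_i)\text{ traverses }\alpha_j\}$, and a directed path $P=E_1\cdots E_k$ has length $s(P)=\sum s(E_i)$. The directed ball is $B_d(\mathcal{K}_i)=\{\mathcal{K}_j:\text{there is a directed path }P\text{ from }\mathcal{K}_i\text{ to }\mathcal{K}_j\text{ with }s(P)\le d\}$, where the empty path (length $0$) is allowed, so $B_0(\mathcal{K}_i)=\{\mathcal{K}_i\}$. *)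

From mathcomp Require Import all_boot.
From Stdlib Require Import ClassicalEpsilon.
Set Implicit Arguments. Unset Strict Implicit. Unset Printing Implicit Defensive.

(* An oriented edge is a pair (e, b) : E * bool; b = false is e with its
   chosen orientation, b = true is the reverse edge \bar e. *)
Record gmap (V E : finType) := GMap {
  src : E -> V;
  tgt : E -> V;
  fv  : V -> V;
  fe  : E -> seq (E * bool)     (* f(e) for positively oriented e *)
}.

Section GraphMaps.
Variables (V E : finType) (G : gmap V E).

Definition oedge := (E * bool)%type.
Definition oiota (o : oedge) : V := if o.2 then tgt G o.1 else src G o.1.
Definition otau  (o : oedge) : V := if o.2 then src G o.1 else tgt G o.1.
Definition orev (o : oedge) : oedge := (o.1, ~~ o.2).
Definition rev_path (p : seq oedge) : seq oedge := rev (map orev p).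

Definition is_edge_path (p : seq oedge) : bool :=
  (p != [::]) && sorted (fun o o' => otau o == oiota o') p.

(* f is a graph map: f(e) is an edge path from f(iota e) to f(tau e);
   f(\bar e) := reverse of f(e) is built into [fo]. *)
Definition is_graph_map : Prop :=
  forall e : E, [/\ is_edge_path (fe G e),
                    oiota (head (e, false) (fe G e)) = fv G (src G e)
                  & otau (last (e, false) (fe G e)) = fv G (tgt G e)].

(* f on oriented edges, on paths (concatenation, no tightening), powers *)
Definition fo (o : oedge) : seq oedge :=
  if o.2 then rev_path (fe G o.1) else fe G o.1.
Definition fpath (p : seq oedge) : seq oedge := flatten (map fo p).
Definition fiter (n : nat) (o : oedge) : seq oedge := iter n fpath [:: o].

Definition traverses (p : seq oedge) (e : E) : bool := has (fun o => o.1 == e) p.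

Definition Tmx (i j : E) : nat := count (fun o => o.1 == j) (fe G i).
Fixpoint Tpow (n : nat) (i j : E) : nat :=
  match n with
  | 0 => (i == j : nat)
  | n'.+1 => \sum_(k : E) Tpow n' i k * Tmx k j
  end.
Definition irreducible_matrix : Prop := forall i j : E, exists n, 0 < Tpow n i j.

Definition valence (v : V) : nat := #|[pred o : oedge | oiota o == v]|.

Definition irreducible : Prop :=
  irreducible_matrix /\ forall v : V, 3 <= valence v.

Definition expanding : Prop :=
  forall (e : E) (M : nat), exists N, forall n, N <= n -> M <= size (fiter n (e, false)).

Definition mixing (e : E) : bool := 1 < size (fe G e).
Definition surplus (e : E) : bool :=
  ~~ mixing e &&
  [exists u : E, (u != e) && ((fe G e == fe G u) || (fe G e == rev_path (fe G u)))].

Definition sstep (e e' : E) : bool :=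
  ~~ mixing e && ~~ surplus e && traverses (fe G e) e'.
Definition ssym (e e' : E) : bool := sstep e e' || sstep e' e.

Definition stack_of (e : E) : {set E} := [set e' | connect ssym e e'].
Definition stacks : {set {set E}} := [set stack_of e | e : E].

Definition final (e : E) : bool := mixing e || surplus e.
(* the final edge of a stack (unique in each stack) *)
Definition alpha (K : {set E}) : option E := [pick a in K | final a].
Definition omega (K : {set E}) : nat :=
  if alpha K is Some a then (size (fe G a)).-1 else 0.

Definition sg_edge (K K1 : {set E}) : bool :=
  if alpha K is Some a then has (fun o => o.1 \in K1) (fe G a) else false.
Definition is_slen (K K1 : {set E}) (s : nat) : Prop :=
  match alpha K, alpha K1 with
  | Some a, Some b =>
      0 < s /\ traverses (fiter s (a, false)) b /\
      forall s', 0 < s' < s -> ~~ traverses (fiter s' (a, false)) b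
  | _, _ => False
  end.

(* a directed path in the stack graph from K to K', listing each
   successive vertex with the length of the edge entering it *)
Fixpoint dpath (K : {set E}) (p : seq ({set E} * nat)) (K' : {set E}) : Prop :=
  match p with
  | [::] => K = K'
  | (K1, s) :: p' => [/\ K1 \in stacks, sg_edge K K1, is_slen K K1 s & dpath K1 p' K']
  end.

Definition in_ball (d : nat) (K K' : {set E}) : Prop :=
  exists p, dpath K p K' /\ sumn (map snd p) <= d.

Definition pbool (P : Prop) : bool := if excluded_middle_informative P then true else false.

Definition ball (d : nat) (K : {set E}) : {set {set E}} :=
  [set K' in stacks | pbool (in_ball d K K')].

End GraphMaps.

From Pilot Require Import Defs.
From mathcomp Require Import all_boot.
From Stdlib Require Import ClassicalEpsilon.
Set Implicit Arguments. Unset Strict Implicit. Unset Printing Implicit Defensive.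

(* Applying f to an edge path p replaces each edge o by f(o), so
   |f(p)| = |p| + sum_(o in p) (|f(o)| - 1).  Iterating, each edge e traversed by
   some f^k(alpha_i) with k <= d contributes |f(e)| - 1 at least once to
   |f^(d+1)(alpha_i)|, on top of the initial 1.  If K_j lies in B_d(K_i), a
   directed path of length s <= d leads from K_i to K_j, and composing the
   traversals along it shows that f^s(alpha_i) traverses alpha_j.  Distinct stacks
   have distinct final edges, so the weights omega(K_j) = |f(alpha_j)| - 1 of the
   ball occur among these contributions. *)

Lemma leq_sum_subset (T : finType) (A B : {set T}) (F : T -> nat) :
  A \subset B -> \sum_(i in A) F i <= \sum_(i in B) F i.
Proof.
by move=> AB; rewrite [X in _ <= X](big_setID (A := B) A) (setIidPr AB) leq_addr.
Qed.

Lemma leq_sum_setU (T : finType) (A B : {set T}) (F : T -> nat) :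
  \sum_(i in A :|: B) F i <= \sum_(i in A) F i + \sum_(i in B) F i.
Proof.
rewrite (big_setID (A := A :|: B) A) setUK setDUl setDv set0U leq_add2l.
exact/leq_sum_subset/subsetDl.
Qed.

Section StackGraphBound.
Variables (V E : finType) (G : gmap V E).
Implicit Types (o : oedge E) (p q : seq (oedge E)) (a b : E) (K : {set E}).

Definition traversed p : {set E} := [set b | traverses p b].

Definition visited (x : oedge E) (n : nat) : {set E} :=
  \bigcup_(k < n) traversed (fiter G k x).

Lemma traversed_cons o p : traversed (o :: p) = o.1 |: traversed p.
Proof. by apply/setP => b; rewrite !inE /traverses /= eq_sym. Qed.

Lemma leq_sum_traversed (F : E -> nat) p :
  \sum_(b in traversed p) F b <= \sum_(o <- p) F o.1.
Proof.
elim: p => [|o p IHp]; first by rewrite big_nil big_pred0 // => b; rewrite inE.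
rewrite big_cons traversed_cons; apply: leq_trans (leq_sum_setU _ _ _) _.
by rewrite big_set1 leq_add2l.
Qed.

Lemma size_fo o : size (fo G o) = size (fe G o.1).
Proof. by rewrite /fo; case: o.2; rewrite // /rev_path size_rev size_map. Qed.

Lemma traversed_fo o : traversed (fo G o) = traversed (fe G o.1).
Proof.
apply/setP => b; rewrite !inE /fo; case: o.2 => //.
by rewrite /traverses /rev_path has_rev has_map.
Qed.

Lemma mem_traversed p b : (b \in traversed p) = has (fun o => o.1 == b) p.
Proof. by rewrite inE. Qed.

Lemma mem_traversed_fpath p b :
  (b \in traversed (Defs.fpath G p)) = has (fun o => b \in traversed (fe G o.1)) p.
Proof.
elim: p => [|o p IHp] /=; first by rewrite inE.
rewrite -IHp -traversed_fo !mem_traversed.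
by rewrite /Defs.fpath /= has_cat.
Qed.

Lemma traversed_fpathS p q : traversed p \subset traversed q ->
  traversed (Defs.fpath G p) \subset traversed (Defs.fpath G q).
Proof.
move=> /subsetP pq; apply/subsetP => b; rewrite !mem_traversed_fpath.
case/hasP => o po bo.
have /pq : o.1 \in traversed p by rewrite mem_traversed; apply/hasP; exists o.
rewrite mem_traversed => /hasP [o' qo' /eqP o'o].
by apply/hasP; exists o'; rewrite // o'o.
Qed.

Lemma traversed_iter_fpathS n p q : traversed p \subset traversed q ->
  traversed (iter n (Defs.fpath G) p) \subset traversed (iter n (Defs.fpath G) q).
Proof. by move=> pq; elim: n => //= n; apply: traversed_fpathS. Qed.

Lemma traversed_fiter_trans x s t b : b \in traversed (fiter G s x) ->
  traversed (fiter G t (b, false)) \subset traversed (fiter G (t + s) x).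
Proof.
move=> bs; rewrite /fiter iterD; apply: traversed_iter_fpathS.
by apply/subsetP => c; rewrite mem_traversed /= orbF => /eqP <-.
Qed.

Lemma visitedS x n : visited x n.+1 = visited x n :|: traversed (fiter G n x).
Proof. by rewrite /visited big_ord_recr. Qed.

Lemma mem_visited x n s b : s < n -> b \in traversed (fiter G s x) -> b \in visited x n.
Proof. by move=> sn; apply/subsetP/(bigcup_sup (Ordinal sn)). Qed.

Section GraphMap.
Hypothesis G_graph_map : is_graph_map G.

Lemma fe_neq_nil e : fe G e != [::].
Proof. by have [/andP []] := G_graph_map e. Qed.

Lemma size_fpath p :
  size (Defs.fpath G p) = size p + \sum_(o <- p) (size (fe G o.1)).-1.
Proof.
elim: p => [|o p IHp]; first by rewrite big_nil.
rewrite big_cons /Defs.fpath /= size_cat -/(Defs.fpath G p) IHp size_fo.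
have fe_gt0 : 0 < size (fe G o.1) by rewrite lt0n size_eq0 fe_neq_nil.
by rewrite -{1}(prednK fe_gt0) !addSn addnCA.
Qed.

Lemma size_fiter_visited x n :
  1 + \sum_(b in visited x n) (size (fe G b)).-1 <= size (fiter G n x).
Proof.
elim: n => [|n IHn]; first by rewrite /visited big_ord0 big_set0.
set w := fun b => (size (fe G b)).-1.
rewrite visitedS /fiter iterS -/(fiter G n x) size_fpath.
apply: (@leq_trans (1 + \sum_(b in visited x n) w b + \sum_(o <- fiter G n x) w o.1)).
  rewrite -addnA leq_add2l (leq_trans (leq_sum_setU _ _ _)) //.
  by rewrite leq_add2l leq_sum_traversed.
by rewrite leq_add2r.
Qed.

End GraphMap.

Lemma ssym_sym : symmetric (ssym G).
Proof. by move=> x y; rewrite /ssym orbC. Qed.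

Lemma sstep_functional e w z : sstep G e w -> sstep G e z -> w = z.
Proof.
move=> /andP [/andP [single _] ew] /andP [_ ez]; move: single ew ez.
rewrite /mixing /traverses; case: (fe G e) => [|o [|o' l]] //= _.
by rewrite !orbF => /eqP <- /eqP <-.
Qed.

Lemma final_sstep a w : final G a -> sstep G a w = false.
Proof. by rewrite /final /sstep; case: (mixing G a); case: (surplus G a). Qed.

Lemma connect_ssym_final a b : final G a -> final G b -> connect (ssym G) a b -> a = b.
Proof.
move=> fa fb ab.
(* Since [sstep] is functional and final edges have no successor, the edges
   flowing into [a] form an [ssym]-closed set. *)
have reach_a : closed (ssym G) [pred y | connect (sstep G) y a].
  apply: (intro_closed (sym_connect_sym ssym_sym)) => y z /orP [yz | zy];
    rewrite !inE => ya.
  - case/connectP: ya => [[|w q] /= wq ay]; first by rewrite -ay final_sstep in yz.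
    case/andP: wq => /(sstep_functional yz) wz zq.
    by apply/connectP; exists q; rewrite // wz.
  - exact: connect_trans (connect1 zy) ya.
have /connectP [[|w q] /= // /andP [bw _] _] : connect (sstep G) b a.
  by have := closed_connect reach_a ab; rewrite !inE connect0.
by rewrite final_sstep in bw.
Qed.

Lemma stacks_stack_of K b : K \in stacks G -> b \in K -> K = stack_of G b.
Proof.
case/imsetP => e _ ->; rewrite inE => eb.
have ssym_connect_sym := sym_connect_sym ssym_sym.
apply/setP => x; rewrite !inE; apply/idP/idP => [ex | bx].
  by apply: connect_trans ex; rewrite ssym_connect_sym.
exact: connect_trans eb bx.
Qed.

Lemma alpha_mem K b : alpha G K = Some b -> b \in K.
Proof. by rewrite /alpha; case: pickP => // x /andP [xK _] [<-]. Qed.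

Lemma alpha_final K a : K \in stacks G -> a \in K -> final G a -> alpha G K = Some a.
Proof.
move=> K_stack aK fa; rewrite /alpha; case: pickP => [b /andP [bK fb] | no_final].
  congr Some; apply/esym/(connect_ssym_final fa fb).
  by rewrite (stacks_stack_of K_stack aK) inE in bK.
by move: (no_final a); rewrite aK fa.
Qed.

Lemma alpha_inj K1 K2 b : K1 \in stacks G -> K2 \in stacks G ->
  alpha G K1 = Some b -> alpha G K2 = Some b -> K1 = K2.
Proof.
move=> K1_stack K2_stack /alpha_mem bK1 /alpha_mem bK2.
by rewrite (stacks_stack_of K1_stack bK1) (stacks_stack_of K2_stack bK2).
Qed.

Lemma dpath_alpha_traversed K ks K' a : alpha G K = Some a -> dpath G K ks K' ->
  exists2 b, alpha G K' = Some b & b \in traversed (fiter G (sumn (map snd ks)) (a, false)).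
Proof.
elim: ks K a => [|[K1 s] ks IHks] K a alphaK /=.
  by move=> <-; exists a; rewrite // mem_traversed /= eqxx.
case=> _ _ + Kks; rewrite /is_slen alphaK.
case alphaK1: (alpha G K1) => [a1|] // [_ [a_trav _]].
have [b alphaK' b_trav] := IHks _ _ alphaK1 Kks.
exists b => //; rewrite addnC; apply/subsetP: b_trav; apply: traversed_fiter_trans.
by rewrite mem_traversed.
Qed.

Lemma ball_alpha_visited d K K' a : alpha G K = Some a -> K' \in ball G d K ->
  exists2 b, alpha G K' = Some b & b \in visited (a, false) d.+1.
Proof.
move=> alphaK; rewrite inE /pbool => /andP [_].
case: excluded_middle_informative => // [[ks [Kks ks_d]]] _.
have [b alphaK' b_trav] := dpath_alpha_traversed alphaK Kks.
by exists b => //; apply: mem_visited b_trav; rewrite ltnS.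
Qed.

Lemma leq_sum_omega (S : {set {set E}}) (B : {set E}) : S \subset stacks G ->
    (forall K, K \in S -> exists2 b, alpha G K = Some b & b \in B) ->
  \sum_(K in S) omega G K <= \sum_(b in B) (size (fe G b)).-1.
Proof.
move=> /subsetP S_stacks S_alpha.
pose weight (ob : option E) := if ob is Some b then (size (fe G b)).-1 else 0.
rewrite (eq_bigr (weight \o alpha G)) //.
rewrite -(big_imset weight (h := alpha G)) /=; last first.
  move=> K1 K2 K1S K2S; have [b alphaK1 _] := S_alpha _ K1S.
  by rewrite alphaK1 => /esym; apply: alpha_inj alphaK1; apply: S_stacks.
rewrite -[X in _ <= X](big_imset weight (h := Some)) /=; last by move=> ? ? _ _ [].
apply: leq_sum_subset; apply/subsetP => _ /imsetP [K KS ->].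
by have [b -> bB] := S_alpha _ KS; apply: imset_f.
Qed.

End StackGraphBound.

Theorem lemma4p7 (V E : finType) (G : gmap V E) :
  is_graph_map G -> irreducible G -> expanding G ->
  forall (K : {set E}) (a : E),
    K \in stacks G -> a \in K -> final G a ->
    forall d : nat,
      1 + \sum_(K' in ball G d K) omega G K' <= size (fiter G d.+1 (a, false)).
Proof.
move=> G_graph_map _ _ K a K_stack aK fa d.
apply: leq_trans (size_fiter_visited G_graph_map (a, false) d.+1).
rewrite leq_add2l; apply: leq_sum_omega => [|K'].
  by apply/subsetP => K'; rewrite inE => /andP [].
exact/ball_alpha_visited/(alpha_final K_stack aK fa).
Qed.
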